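(* If $v_1$ and $v_2$ are symmetric submodular valuations on a finite set $X$, then $v_1\vee v_2$ is submodular (and symmetric).
   Context: A valuation on a finite set $X$ is a function $v:2^X\to\mathbb{R}_{\ge 0}$ with $v(\emptyset)=0$ and monotone under inclusion; it is symmetric if $v(S)$ depends only on $|S|$; it is submodular if $v(A)+v(B)\ge v(A\cup B)+v(A\cap B)$ for all $A,B\subseteq X$. $(v_1\vee v_2)(S)=\max_{T\subseteq S}(v_1(T)+v_2(S\setminus T))$. *)

From mathcomp Require Import all_boot all_order all_algebra.
From mathcomp Require Import all_reals.
Set Implicit Arguments. Unset Strict Implicit. Unset Printing Implicit Defensive.
Import Order.TTheory GRing.Theory Num.Theory.
Local Open Scope ring_scope.

Definition valuation (R : realType) (X : finType) (v : {set X} -> R) : Prop :=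
  v set0 = 0 /\ (forall S, 0 <= v S) /\
  (forall A B : {set X}, A \subset B -> v A <= v B).

Definition symmetric_val (R : realType) (X : finType) (v : {set X} -> R) : Prop :=
  forall A B : {set X}, #|A| = #|B| -> v A = v B.

Definition submodular (R : realType) (X : finType) (v : {set X} -> R) : Prop :=
  forall A B : {set X}, v (A :|: B) + v (A :&: B) <= v A + v B.

(* (v1 \/ v2)(S) = max_{T subset S} v1(T) + v2(S \ T).  The big max over the
   (nonempty) powerset with neutral element 0; since all values are
   nonnegative for valuations this is the true maximum. *)
Definition join_val (R : realType) (X : finType) (v1 v2 : {set X} -> R)
  (S : {set X}) : R :=
  \big[Num.max/0]_(T in powerset S) (v1 T + v2 (S :\: T)).

From mathcomp Require Import all_boot all_order all_algebra.
From mathcomp Require Import all_reals.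
From mathcomp Require Import zify lra.

(* A symmetric submodular valuation is a concave function of the cardinality.
   Take optimal splits [T] of [A :|: B] and [T'] of [A :&: B], and share the
   total size [#|T| + #|T'|] between [A] and [B] as [ja + jb], so that [ja]
   lies between [#|T'|] and [#|T|] while the complementary size [#|A| - ja]
   lies between those of [T'] and [T].  Concavity of [v1] on the first parts
   and of [v2] on the complements shows that any splits of [A] and [B] with
   these sizes are at least as good.  Symmetry of the join is clear, since an
   optimal split of [S] can be copied, size for size, into any [S'] with
   [#|S'| = #|S|]. *)

Set Implicit Arguments.
Unset Strict Implicit.
Unset Printing Implicit Defensive.
Import Order.TTheory GRing.Theory Num.Theory.
Local Open Scope ring_scope.

Lemma subset_of_card (X : finType) (S : {set X}) k : (k <= #|S|)%N ->
  exists2 T : {set X}, T \subset S & #|T| = k.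
Proof.
case/card_geqP=> s [s_uniq <- sS]; exists [set x in s].
  by apply/subsetP=> x; rewrite inE => /sS.
by rewrite cardsE (card_uniqP s_uniq).
Qed.

Lemma sets_of_cards (X : finType) (i a b u : nat) :
  (i <= a <= u)%N -> (a + b = i + u)%N -> (u <= #|X|)%N ->
  exists A B : {set X},
    [/\ #|A| = a, #|B| = b, #|A :&: B| = i & #|A :|: B| = u].
Proof.
move=> /andP[le_ia le_au] sum_ab le_uX.
have [U _ cardU] := @subset_of_card _ [set: X] u ltac:(by rewrite cardsT).
have [A sAU cardA] := @subset_of_card _ U a ltac:(by rewrite cardU).
have [I sIA cardI] := @subset_of_card _ A i ltac:(by rewrite cardA).
have sAIU : A :\: I \subset U by apply: subset_trans (subsetDl _ _) sAU.
exists A, (U :\: (A :\: I)); split=> //.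
- by rewrite !cardsDS // cardU cardA cardI; lia.
- by rewrite setIDA (setIidPl sAU) setDDr setDv set0U (setIidPr sIA).
rewrite -cardU; apply: eq_card => x; rewrite !inE.
have := subsetP sIA x; have := subsetP sAU x.
by case: (x \in I) (x \in A) (x \in U) => [] [] [] // ->.
Qed.

Lemma split_cards (t t' a b i u : nat) :
  (u + i = a + b -> i <= a <= u -> t <= u -> t' <= i ->
  exists ja jb, [/\ ja <= a, jb <= b, ja + jb = t + t',
    minn t' t <= ja <= maxn t' t &
    minn (i - t') (u - t) <= a - ja <= maxn (i - t') (u - t)])%N.
Proof.
move=> *; pose ja := maxn (minn t t') (minn (maxn t t') (t' + (a - i))).
by exists ja, (t + t' - ja)%N; split; rewrite /ja; lia.
Qed.

Section SymmetricSubmodular.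
Variables (R : realType) (X : finType) (v : {set X} -> R).
Hypotheses (v_sym : symmetric_val v) (v_submod : submodular v).

Lemma symmetric_submodular_exchange (P Q A B : {set X}) :
  (minn #|P| #|Q| <= #|A| <= maxn #|P| #|Q|)%N ->
  (#|A| + #|B| = #|P| + #|Q|)%N -> v P + v Q <= v A + v B.
Proof.
move=> hA hsum; wlog le_PQ : P Q hA hsum / (#|P| <= #|Q|)%N => [hw|].
  have [le_PQ|lt_QP] := leqP #|P| #|Q|; first exact: hw.
  by rewrite addrC; apply: hw; lia.
have [A' [B' [cardA cardB cardI cardU]]] :=
  @sets_of_cards X #|P| #|A| #|B| #|Q| ltac:(lia) ltac:(lia) (max_card _).
have := v_submod A' B'.
by rewrite (v_sym cardU) (v_sym cardI) (v_sym cardA) (v_sym cardB) addrC.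
Qed.

End SymmetricSubmodular.

Section Join.
Variables (R : realType) (X : finType) (v1 v2 : {set X} -> R).

Lemma le_join_val (S T : {set X}) :
  T \subset S -> v1 T + v2 (S :\: T) <= join_val v1 v2 S.
Proof. by move=> sTS; apply: le_bigmax_cond; rewrite powersetE. Qed.

Hypotheses (v1_ge0 : forall S, 0 <= v1 S) (v2_ge0 : forall S, 0 <= v2 S).

Lemma join_val_attained (S : {set X}) :
  exists2 T : {set X}, T \subset S & join_val v1 v2 S = v1 T + v2 (S :\: T).
Proof.
have S0 : set0 \in powerset S by rewrite powersetE sub0set.
have [T] := @eq_bigmax _ _ _ 0 _ _ (fun T => v1 T + v2 (S :\: T)) S0
  (fun T _ => addr_ge0 (v1_ge0 T) (v2_ge0 _)).
by rewrite powersetE; exists T.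
Qed.

Hypotheses (v1_sym : symmetric_val v1) (v2_sym : symmetric_val v2).

Lemma join_val_symmetric : symmetric_val (join_val v1 v2).
Proof.
suff le_join (S S' : {set X}) : #|S| = #|S'| ->
    join_val v1 v2 S <= join_val v1 v2 S'.
  by move=> S S' eqSS'; apply/le_anti; rewrite !le_join.
move=> eqSS'; have [T sTS ->] := join_val_attained S.
have [T' sT'S' cardT'] := @subset_of_card _ S' #|T|
  ltac:(by rewrite -eqSS' subset_leq_card).
rewrite (v1_sym (esym cardT')) (@v2_sym (S :\: T) (S' :\: T')).
  exact: le_join_val.
by rewrite !cardsDS // eqSS' cardT'.
Qed.

Hypotheses (v1_submod : submodular v1) (v2_submod : submodular v2).

Lemma join_val_submodular : submodular (join_val v1 v2).
Proof.
move=> A B.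
have [T sT ->] := join_val_attained (A :|: B).
have [T' sT' ->] := join_val_attained (A :&: B).
have cardUI := cardsUI A B.
have le_T := subset_leq_card sT; have le_T' := subset_leq_card sT'.
have [ja [jb [le_ja le_jb sum_j ja_between rest_between]]] :=
  split_cards cardUI ltac:(by rewrite !subset_leq_card ?subsetIl ?subsetUl)
    le_T le_T'.
have [TA sTA cardTA] := subset_of_card le_ja.
have [TB sTB cardTB] := subset_of_card le_jb.
apply: le_trans (lerD (le_join_val sTA) (le_join_val sTB)).
have exchange1 : v1 T' + v1 T <= v1 TA + v1 TB.
  by apply: symmetric_submodular_exchange; rewrite // ?cardTA ?cardTB; lia.
have exchange2 : v2 ((A :&: B) :\: T') + v2 ((A :|: B) :\: T)
    <= v2 (A :\: TA) + v2 (B :\: TB).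
  by apply: symmetric_submodular_exchange;
    rewrite // !cardsDS // ?cardTA ?cardTB //; lia.
lra.
Qed.

End Join.

Theorem proposition3 (R : realType) (X : finType) (v1 v2 : {set X} -> R) :
  valuation v1 -> symmetric_val v1 -> submodular v1 ->
  valuation v2 -> symmetric_val v2 -> submodular v2 ->
  submodular (join_val v1 v2) /\ symmetric_val (join_val v1 v2).
Proof.
move=> [_ [v1_ge0 _]] v1_sym v1_submod [_ [v2_ge0 _]] v2_sym v2_submod.
by split; [apply: join_val_submodular | apply: join_val_symmetric].
Qed.
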